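(* Let $\mathcal M$ be a finite polyptych lattice over $F$ with canonical semialgebra $S_{\mathcal M}$. Restriction to $\mathcal M\subseteq S_{\mathcal M}$ gives a bijection between the set of $F_{\ge0}$-semialgebra morphisms $\tilde p:(S_{\mathcal M},\oplus,\star)\to(F\cup\{\infty\},\min,+)$ that take finite values on $S_{\mathcal M}\setminus\{\infty\}$, and the set $\mathrm{Sp}(\mathcal M)$ of points of $\mathcal M$. The inverse sends $p$ to $\tilde p(\bigoplus_{m\in S}m)=\min_{m\in S}p(m)$, $\tilde p(\infty)=\infty$.
   Context: Fix a subring $F$ with $\mathbb Z\subseteq F\subseteq\mathbb R$. A polyptych lattice of rank $r$ over $F$ is a collection $\{M_\alpha\}_{\alpha\in I}$ of free $F$-modules of rank $r$ with piecewise $F$-linear maps (continuous and $F$-linear on each cone of some complete $F$-rational fan) $\mu_{\alpha,\beta}:M_\alpha\to M_\beta$ with $\mu_{\alpha,\alpha}=\mathrm{id}$, $\mu_{\alpha,\beta}=\mu_{\beta,\alpha}^{-1}$, $\mu_{\beta,\gamma}\circ\mu_{\alpha,\beta}=\mu_{\alpha,\gamma}$; finite if $I$ is finite. Elements are classes of $\bigsqcup M_\alpha$ under $m_\alpha\sim\mu_{\alpha,\beta}(m_\alpha)$; $\pi_\alpha$ the chart maps; $\mathcal M_{\mathbb R}$ has charts $M_\alpha\otimes\mathbb R$; $m+_\alpha m':=\pi_\alpha^{-1}(\pi_\alpha(m)+\pi_\alpha(m'))$; $\lambda m:=\pi_\alpha^{-1}(\lambda\pi_\alpha(m))$ ($\lambda\ge0$).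 A point is $p:\mathcal M\to F$ with $p(m)+p(m')=\min_\alpha p(m+_\alpha m')$ and $p(\lambda m)=\lambda p(m)$ ($\lambda\in F_{\ge0}$); $\mathrm{Sp}(\mathcal M)$ is the set of points; points extend continuously to $\mathcal M_{\mathbb R}$. PL half-space: $\mathcal H_{p,a}=\{m\in\mathcal M_{\mathbb R}:p(m)\ge a\}$; $\mathrm{p\text{-}conv}_F(S)=\bigcap\{\mathcal H_{p,a}:p\in\mathrm{Sp}(\mathcal M),a\in F,S\subseteq\mathcal H_{p,a}\}$. The canonical semialgebra $S_{\mathcal M}$: the free commutative idempotent semigroup (operation $\oplus$) on elements of $\mathcal M$ modulo $\bigoplus_{m\in S}m=\bigoplus_{m\in S'}m$ whenever $S,S'\subseteq\mathcal M$ are finite with $\mathrm{p\text{-}conv}_F(S)=\mathrm{p\text{-}conv}_F(S')$, with an adjoined additive identity $\infty$; product $m\star m':=\bigoplus_{\alpha\in I}(m+_\alpha m')$, $m\star\infty=\infty$, extended distributively; $F_{\ge0}$-action $\lambda\cdot\bigoplus_{m\in S}m=\bigoplus_{m\in S}\lambda m$, $\lambda\cdot\infty=\infty$ for $\lambda>0$, $0\cdot\infty=0_{\mathcal M}$ (the element whose chart representatives are all $0$, which is the $\star$-identity). $(F\cup\{\infty\},\min,+)$ carries the usual $F_{\ge0}$-scaling. An $F_{\ge0}$-semialgebra morphism preserves $\oplus$ (to $\min$), $\star$ (to $+$), identities and the $F_{\ge0}$-action. *)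

From HB Require Import structures.
From Stdlib Require Import List.
From mathcomp Require Import all_boot all_order all_algebra.
From mathcomp Require Import all_classical all_reals all_analysis.
Set Implicit Arguments. Unset Strict Implicit. Unset Printing Implicit Defensive.
Import Order.TTheory GRing.Theory Num.Theory.
Import numFieldTopology.Exports.
Local Open Scope ring_scope.

Section PolyptychDefs.
Variables (R : realType) (F : {pred R}) (r : nat).
Local Notation vec := 'rV[R]_r.

(* F-points of the chart R^r (= M_alpha viewed inside M_alpha ⊗ R) *)
Definition Fvec (v : vec) : Prop := forall i, v ord0 i \in F.
Definition Fmx (A : 'M[R]_r) : Prop := forall i j, A i j \in F.

Definition cone (us : seq vec) (x : vec) : Prop :=
  forall u, u \in us -> 0 <= (x *m u^T) ord0 ord0.

Definition pwFlinear (f : vec -> vec) : Prop :=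
  exists pieces : seq (seq vec * 'M[R]_r),
    (forall x, exists2 c, c \in pieces & cone c.1 x) /\
    (forall c, c \in pieces ->
       (forall u, u \in c.1 -> Fvec u) /\ Fmx c.2 /\
       (forall x, cone c.1 x -> f x = x *m c.2)).

Variables (I : finType) (mu : I -> I -> vec -> vec).

Definition polyptych : Prop :=
  (forall a b, pwFlinear (mu a b)) /\
  (forall a x, mu a a x = x) /\
  (forall a b x, mu b a (mu a b x) = x) /\
  (forall a b c x, mu b c (mu a b x) = mu a c x).

(* elements of M_R: compatible families of chart representatives *)
Definition isMR (m : I -> vec) : Prop := forall a b, m b = mu a b (m a).
Definition isM (m : I -> vec) : Prop := isMR m /\ forall a, Fvec (m a).

Definition chartinv (a : I) (v : vec) : I -> vec := fun b => mu a b v.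
Definition addM (a : I) (m m' : I -> vec) : I -> vec := chartinv a (m a + m' a).
Definition scaleM (a : I) (l : R) (m : I -> vec) : I -> vec := chartinv a (l *: m a).
Definition zeroM : I -> vec := fun _ => 0.

Definition isPoint (p : (I -> vec) -> R) : Prop :=
  (forall m, isM m -> p m \in F) /\
  (forall m m', isM m -> isM m' ->
     (forall a, p m + p m' <= p (addM a m m')) /\
     (exists a, p (addM a m m') = p m + p m')) /\
  (forall a l m, isM m -> l \in F -> 0 <= l -> p (scaleM a l m) = l * p m).

Definition isExt (p pR : (I -> vec) -> R) : Prop :=
  (forall m, isM m -> pR m = p m) /\
  (forall a, continuous (fun v : vec => pR (chartinv a v))) /\
  (forall a l m, isMR m -> 0 <= l -> pR (scaleM a l m) = l * pR m).

Definition in_pconv (S : seq (I -> vec)) (x : I -> vec) : Prop :=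
  forall p pR (c : R), isPoint p -> isExt p pR -> c \in F ->
    (forall m, In m S -> c <= p m) -> c <= pR x.

Definition pconv_eq (S T : seq (I -> vec)) : Prop :=
  forall x, isMR x -> (in_pconv S x <-> in_pconv T x).

(* Representatives of S_M: None = infinity, Some S = (+)_{m in S} m *)
Definition Rep := option (seq (I -> vec)).

Definition validRep (o : Rep) : Prop :=
  match o with
  | None => True
  | Some s => s <> [::] /\ forall m, In m s -> isM m
  end.

Definition repEq (o o' : Rep) : Prop :=
  match o, o' with
  | None, None => True
  | Some s, Some t => pconv_eq s t
  | _, _ => False
  end.

Definition oplusR (o o' : Rep) : Rep :=
  match o, o' with
  | None, x => x
  | x, None => x
  | Some s, Some t => Some (s ++ t)
  end.

Definition starR (o o' : Rep) : Rep :=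
  match o, o' with
  | Some s, Some t =>
      Some (flatten [seq [seq addM a m m' | m' <- t, a <- enum I] | m <- s])
  | _, _ => None
  end.

Definition oneR : Rep := Some [:: zeroM].

Definition actR (a : I) (l : R) (o : Rep) : Rep :=
  match o with
  | Some s => Some [seq scaleM a l m | m <- s]
  | None => if l == 0 then oneR else None
  end.

(* (F ∪ {oo}, min, +) with None = oo *)
Definition minE (x y : option R) : option R :=
  match x, y with
  | None, z => z
  | z, None => z
  | Some u, Some v => Some (Num.min u v)
  end.
Definition addE (x y : option R) : option R :=
  match x, y with Some u, Some v => Some (u + v) | _, _ => None end.
Definition actE (l : R) (x : option R) : option R :=
  match x with Some u => Some (l * u) | None => if l == 0 then Some 0 else None end.

(* F_{>=0}-semialgebra morphisms S_M -> F ∪ {oo}, finite on S_M \ {oo};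
   given as functions on representatives that respect the relation *)
Definition isMorph (f : Rep -> option R) : Prop :=
  (forall o o', validRep o -> validRep o' -> repEq o o' -> f o = f o') /\
  (forall s, validRep (Some s) -> exists2 v, f (Some s) = Some v & v \in F) /\
  (forall o o', validRep o -> validRep o' -> f (oplusR o o') = minE (f o) (f o')) /\
  f None = None /\
  (forall o o', validRep o -> validRep o' -> f (starR o o') = addE (f o) (f o')) /\
  f oneR = Some 0 /\
  (forall a l o, validRep o -> l \in F -> 0 <= l -> f (actR a l o) = actE l (f o)).

Definition restr (f : Rep -> option R) (m : I -> vec) : R := odflt 0 (f (Some [:: m])).

End PolyptychDefs.

(* A morphism is determined by its values on M: a finite sum is sent to the
   minimum of its summands, and additivity and homogeneity on singletons say
   exactly that the restriction to M is a point.  Conversely a point p gives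
   (+)_{m in S} m |-> min_S p; the only issue is that this respects the
   relation p-conv(S) = p-conv(S'), which follows by testing the half-space
   {p >= min_S p}.  That needs a continuous positively homogeneous extension
   of p to M_R: in a chart p is superadditive and F_{>=0}-homogeneous, hence
   Lipschitz on F^r, and inf_{w in F^r, t > 0} (t p(w) + L |v - t w|) extends it. *)

From HB Require Import structures.
From Stdlib Require Import List.
From mathcomp Require Import all_boot all_order all_algebra.
From mathcomp Require Import all_classical all_reals all_analysis.
From mathcomp Require Import lra.
Import Order.TTheory GRing.Theory Num.Theory.
Import numFieldTopology.Exports.
Local Open Scope classical_set_scope.
Local Open Scope ring_scope.
Set Implicit Arguments. Unset Strict Implicit.

Section MatrixNorm.
Variable R : realDomainType.

Lemma ler_mx_norm_entry m n (M : 'M[R]_(m, n)) i j : `|M i j| <= `|M|.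
Proof.
rewrite [leRHS]/Num.Def.normr /= mx_normrE.
by apply/bigmax_geP; right; exists (i, j).
Qed.

Lemma mx_norm_le m n (M : 'M[R]_(m, n)) c :
  0 <= c -> (forall i j, `|M i j| <= c) -> `|M| <= c.
Proof.
by move=> c0 Mc; rewrite [leLHS]/Num.Def.normr /= mx_normrE bigmax_le // => -[i j].
Qed.

Definition mx_abs_sum m n (A : 'M[R]_(m, n)) : R := \sum_i \sum_j `|A i j|.

Lemma mx_abs_sum_ge0 m n (A : 'M[R]_(m, n)) : 0 <= mx_abs_sum A.
Proof. by apply: sumr_ge0 => i _; apply: sumr_ge0. Qed.

Lemma mulmx_norm_le m n (x : 'rV[R]_m) (A : 'M[R]_(m, n)) :
  `|x *m A| <= mx_abs_sum A * `|x|.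
Proof.
apply: mx_norm_le => [|i j]; first by rewrite mulr_ge0 ?mx_abs_sum_ge0.
rewrite mxE (le_trans (ler_norm_sum _ _ _)) // mulr_suml; apply: ler_sum => k _.
rewrite normrM mulrC ler_pM // ?(ord1 i) ?ler_mx_norm_entry //.
by rewrite (bigD1 j) //= lerDl sumr_ge0.
Qed.

End MatrixNorm.

Lemma lipschitz_at_continuous (R : realFieldType) (V W : normedModType R)
    (f : V -> W) x d K :
  0 < d -> 0 <= K -> (forall y, `|x - y| < d -> `|f x - f y| <= K * `|x - y|) ->
  {for x, continuous f}.
Proof.
move=> d0 K0 fK; apply/cvgrPdist_lt => e e0; apply/nbhs_normP.
have K1 : 0 < K + 1 by rewrite ltr_wpDl.
exists (Num.min d (e / (K + 1))) => [|y /=]; first by rewrite /= lt_min d0 divr_gt0.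
rewrite lt_min => /andP[yd ye]; apply: le_lt_trans (fK _ yd) _.
apply: le_lt_trans (_ : K * (e / (K + 1)) < e); first by rewrite ler_wpM2l // ltW.
by rewrite mulrA ltr_pdivrMr // mulrC ltr_pM2l // ltrDl.
Qed.

Section PiecewiseLinear.
Variables (R : realType) (r : nat).
Local Notation vec := 'rV[R]_r.

Lemma not_cone_near (us : seq vec) x : ~ cone us x ->
  exists2 d, 0 < d & forall y, `|x - y| < d -> ~ cone us y.
Proof.
move=> /existsNP[u /not_implyP[uus /negP]]; rewrite -ltNge => xu.
set K := mx_abs_sum u^T; set a := (x *m u^T) ord0 ord0 in xu *.
have K1 : 0 < K + 1 by rewrite ltr_wpDl ?mx_abs_sum_ge0.
exists (- a / (K + 1)); first by rewrite divr_gt0 // oppr_gt0.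
move=> y xy /(_ u uus); set b := (y *m u^T) ord0 ord0 => b0.
have ab : `|a - b| <= K * `|x - y|.
  have -> : a - b = ((x - y) *m u^T) ord0 ord0.
    by rewrite mulmxBl mxE [X in _ = _ + X]mxE.
  by apply: le_trans (mulmx_norm_le (x - y) u^T); apply: ler_mx_norm_entry.
have : K * `|x - y| < - a.
  apply: le_lt_trans (_ : K * (- a / (K + 1)) < - a).
    by rewrite ler_wpM2l ?mx_abs_sum_ge0 ?ltW.
  by rewrite mulrA ltr_pdivrMr // mulrC ltr_pM2l ?ltrDl // oppr_gt0.
move: ab (ler_norm (b - a)); rewrite distrC; lra.
Qed.

Lemma cones_near (pc : seq (seq vec * 'M[R]_r)) x :
  exists2 d, 0 < d & forall y, `|x - y| < d ->
    forall c, c \in pc -> cone c.1 y -> cone c.1 x.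
Proof.
elim: pc => [|c pc [d d0 IH]]; first by exists 1 => // y _ c.
have [cx|ncx] := pselect (cone c.1 x).
  by exists d => // y /IH yd c'; rewrite in_cons => /orP[/eqP->|/yd].
have [d' d'0 nc] := not_cone_near ncx.
exists (Num.min d d') => [|y]; first by rewrite lt_min d0 d'0.
rewrite lt_min => /andP[/IH yd /nc yd'] c'.
by rewrite in_cons => /orP[/eqP-> /yd'|/yd].
Qed.

Variables (F : {pred R}) (f : vec -> vec) (Hf : pwFlinear F f).

Lemma pwFlinear_mx x : exists2 A : 'M[R]_r, Fmx F A & f x = x *m A.
Proof.
have [pc [cover pieces]] := Hf; have [c cpc cx] := cover x.
by have [_ [FA fc]] := pieces c cpc; exists c.2; last exact: fc.
Qed.

Lemma pwFlinear0 : f 0 = 0.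
Proof. by have [A _ ->] := pwFlinear_mx 0; rewrite mul0mx. Qed.

Lemma pwFlinearZ l x : 0 <= l -> f (l *: x) = l *: f x.
Proof.
move=> l0; have [pc [cover pieces]] := Hf; have [c cpc cx] := cover x.
have [_ [_ fc]] := pieces c cpc.
rewrite !fc ?scalemxAl // => u /cx ux.
by rewrite -scalemxAl mxE mulr_ge0.
Qed.

Lemma pwFlinear_continuous : continuous f.
Proof.
move=> x; have [pc [cover pieces]] := Hf; have [d d0 near_x] := cones_near pc x.
pose K := \sum_(c <- pc) mx_abs_sum c.2.
have K0 : 0 <= K by rewrite sumr_ge0 // => c _; apply: mx_abs_sum_ge0.
apply: (lipschitz_at_continuous d0 K0) => y /near_x xy.
have [c cpc cy] := cover y; have [_ [_ fc]] := pieces c cpc.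
rewrite (fc _ (xy c cpc cy)) (fc _ cy) -mulmxBl.
apply: le_trans (mulmx_norm_le _ _) _; rewrite ler_wpM2r //.
by rewrite /K (big_rem c cpc) /= lerDl sumr_ge0 // => c' _; apply: mx_abs_sum_ge0.
Qed.

End PiecewiseLinear.

(* [in_concat] and [in_map_iff] restated for [seq.flatten] and [seq.map], which
   views do not unfold to [List.concat] and [List.map]. *)
Lemma In_flatten (T : Type) (x : T) (ss : seq (seq T)) :
  In x (flatten ss) <-> exists s, In s ss /\ In x s.
Proof. exact: in_concat. Qed.

Lemma In_map (T U : Type) (f : T -> U) y (s : seq T) :
  In y (map f s) <-> exists x, f x = y /\ In x s.
Proof. exact: in_map_iff. Qed.

Lemma mem_In (T : eqType) (x : T) s : x \in s -> In x s.
Proof. by elim: s => //= y s IH; rewrite in_cons => /orP[/eqP->|/IH]; [left|right]. Qed.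

Section SeqMin.
Variables (R : realDomainType) (X : Type) (h : X -> R).

Definition is_min_over (s : seq X) (v : R) : Prop :=
  (forall m, In m s -> v <= h m) /\ (exists2 m, In m s & v = h m).

Lemma is_min_over_uniq s v v' : is_min_over s v -> is_min_over s v' -> v = v'.
Proof.
move=> [vle [m ms ev]] [v'le [m' m's ev']].
by apply/le_anti/andP; split; [rewrite ev'; apply: vle | rewrite ev; apply: v'le].
Qed.

Lemma is_min_over1 m : is_min_over [:: m] (h m).
Proof. by split=> [_ [<-|[]] //|]; exists m; first left. Qed.

Lemma is_min_over_cat s t v w : is_min_over s v -> is_min_over t w ->
  is_min_over (s ++ t) (Num.min v w).
Proof.
move=> [vle [m ms ev]] [wle [m' m't ew]]; split.
  by move=> x /(in_app_or s t x)[/vle|/wle] x_le; rewrite ge_min x_le ?orbT.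
by case: leP => _; [exists m | exists m'] => //; apply: in_or_app; [left|right].
Qed.

Fixpoint seq_min (s : seq X) : R :=
  if s is m :: s' then (if s' is [::] then h m else Num.min (h m) (seq_min s'))
  else 0.

Lemma seq_minP s : s <> [::] -> is_min_over s (seq_min s).
Proof.
elim: s => // m [_ _|m' s IH _]; first exact: is_min_over1.
exact: (is_min_over_cat (is_min_over1 m) (IH _)).
Qed.

End SeqMin.

Section SubringPoints.
Variables (R : realType) (F : {pred R}) (HF : subring_closed F).
HB.instance Definition _ := GRing.isSubringClosed.Build R F HF.

Section HomogeneousExtension.
Variables (n : nat) (g : 'rV[R]_n -> R).
Local Notation vec := 'rV[R]_n.
Hypothesis gD : forall v w, v \is a mxOver F -> w \is a mxOver F ->
  g v + g w <= g (v + w).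
Hypothesis gZ : forall c v, c \in F -> 0 <= c -> v \is a mxOver F ->
  g (c *: v) = c * g v.

Lemma delta_mxOver j : ('e_j : vec) \is a mxOver F.
Proof. by apply/mxOverP => i k; rewrite mxE rpred_nat. Qed.

Lemma g0 : g 0 = 0.
Proof. by have := gZ (rpred0 F) (lexx 0) (mxOver0 (rpred0 F)); rewrite scale0r mul0r. Qed.

Lemma superadditive_sum T (s : seq T) (h : T -> vec) :
  (forall k, h k \is a mxOver F) -> \sum_(k <- s) g (h k) <= g (\sum_(k <- s) h k).
Proof.
move=> hF; elim: s => [|k s IH]; first by rewrite !big_nil g0.
rewrite !big_cons (le_trans _ (gD (hF k) (rpred_sum _ (fun k _ => hF k)))) //.
by rewrite lerD2l.
Qed.

Definition lip_g : R := \sum_j (`|g 'e_j| + `|g (- 'e_j)|).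

Lemma lip_g_ge0 : 0 <= lip_g.
Proof. by rewrite sumr_ge0 // => j _; rewrite addr_ge0. Qed.

Lemma g_coord_ge c j : c \in F ->
  - (`|c| * (`|g 'e_j| + `|g (- 'e_j)|)) <= g (c *: 'e_j).
Proof.
move=> cF; have n1 := normr_ge0 (g 'e_j); have n2 := normr_ge0 (g (- 'e_j)).
have := ler_norm (- g 'e_j); have := ler_norm (- g (- 'e_j)); rewrite !normrN => h2 h1.
have [c0|c0] := lerP 0 c.
  by rewrite gZ ?delta_mxOver // ger0_norm // -mulrN ler_wpM2l //; lra.
have -> : c *: 'e_j = - c *: - 'e_j :> vec by rewrite scaleNr scalerN opprK.
have c0' : 0 <= - c by rewrite oppr_ge0 ltW.
by rewrite gZ ?rpredN ?delta_mxOver // ltr0_norm // -mulrN ler_wpM2l //; lra.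
Qed.

Lemma g_ge_Nnorm v : v \is a mxOver F -> - (lip_g * `|v|) <= g v.
Proof.
move=> /mxOverP vF; rewrite {2}(row_sum_delta v).
apply: le_trans (superadditive_sum _ _); last by move=> j; rewrite mxOverZ ?delta_mxOver.
rewrite /lip_g mulr_suml -sumrN; apply: ler_sum => j _.
apply: le_trans (g_coord_ge _ (vF 0 j)).
by rewrite lerN2 [leRHS]mulrC ler_wpM2r ?addr_ge0 ?ler_mx_norm_entry.
Qed.

Lemma g_lipschitz v w : v \is a mxOver F -> w \is a mxOver F ->
  g v - g w <= lip_g * `|v - w|.
Proof.
move=> vF wF; have := gD vF (rpredB wF vF); rewrite subrKC.
have := g_ge_Nnorm (rpredB wF vF); rewrite distrC; lra.
Qed.

Definition majorant (v w : vec) (t : R) : R := t * g w + lip_g * `|v - t *: w|.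

Lemma majorant_lipschitz v w s t :
  majorant v w s <= majorant v w t + `|s - t| * (`|g w| + lip_g * `|w|).
Proof.
rewrite /majorant mulrDr addrACA lerD //.
  by rewrite -lerBlDl -mulrBl (le_trans (ler_norm _)) // normrM ler_wpM2l.
rewrite mulrCA -mulrDr ler_wpM2l ?lip_g_ge0 // -normrZ.
have -> : v - s *: w = (v - t *: w) - (s - t) *: w by rewrite scalerBl opprB addrA subrK.
exact: ler_normB.
Qed.

Lemma g_le_majorant_ratio v w (a b : nat) : (0 < b)%N ->
  v \is a mxOver F -> w \is a mxOver F -> g v <= majorant v w (a%:R / b%:R).
Proof.
move=> b0 vF wF; have B0 : 0 < b%:R :> R by rewrite ltr0n.
have bq : b%:R * (a%:R / b%:R) = a%:R :> R by rewrite mulrCA divff ?gt_eqF ?mulr1.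
have h := g_lipschitz (mxOverZ (rpred_nat F b) vF) (mxOverZ (rpred_nat F a) wF).
rewrite !gZ ?rpred_nat // -bq -mulrA -scalerA -mulrBr -scalerBr in h.
rewrite normrZ gtr0_norm // mulrCA ler_pM2l // in h.
by rewrite /majorant -lerBlDl.
Qed.

Lemma g_le_majorant v w t : v \is a mxOver F -> w \is a mxOver F -> 0 < t ->
  g v <= majorant v w t.
Proof.
move=> vF wF t0; set K := `|g w| + lip_g * `|w|.
have K0 : 0 <= K by rewrite addr_ge0 ?mulr_ge0 ?lip_g_ge0.
(* approximate t within 1/b by a/b, where b > K/e *)
apply/ler_addgt0Pr => e e0.
pose b := (Num.truncn (K / e)).+1; pose a := Num.truncn (t * b%:R).
have B0 : 0 < b%:R :> R by rewrite ltr0n.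
have /andP[ta at1] := truncn_itv (mulr_ge0 (ltW t0) (ltW B0)).
have ab : `|a%:R / b%:R - t| <= b%:R^-1.
  rewrite distrC ger0_norm ?subr_ge0 ?ler_pdivrMr // lerBlDl.
  rewrite -[X in _ + X]mul1r -mulrDl ler_pdivlMr // ltW //.
  by move: at1; rewrite -addn1 natrD addrC.
have Kb : K / b%:R <= e.
  have := truncnS_gt (K / e); rewrite -/b ltr_pdivrMr // => Kbe.
  by rewrite ler_pdivrMr // mulrC ltW.
have b0 : (0 < b)%N by [].
apply: le_trans (g_le_majorant_ratio a b0 vF wF) _.
apply: le_trans (majorant_lipschitz _ _ _ t) _; rewrite lerD2l.
by apply: le_trans Kb; rewrite -/K mulrC ler_wpM2l.
Qed.

Definition majorants v : set R :=
  [set z | exists w t, [/\ w \is a mxOver F, 0 < t & z = majorant v w t]].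

Definition g_ext v : R := inf (majorants v).

Lemma majorants_lbound v : lbound (majorants v) (- (lip_g * `|v|)).
Proof.
move=> _ [w [t [wF t0 ->]]]; rewrite /majorant.
have := ler_wpM2l (ltW t0) (g_ge_Nnorm wF).
have := ler_wpM2l lip_g_ge0 (lerB_dist (t *: w) v).
rewrite [`|t *: w - v|]distrC normrZ gtr0_norm // mulrBr mulrCA; lra.
Qed.

Lemma g_ext_le v w t : w \is a mxOver F -> 0 < t -> g_ext v <= majorant v w t.
Proof.
move=> wF t0; apply: ge_inf; last by exists w, t.
by exists (- (lip_g * `|v|)); apply: majorants_lbound.
Qed.

Lemma g_ext_ge v c :
  (forall w t, w \is a mxOver F -> 0 < t -> c <= majorant v w t) -> c <= g_ext v.
Proof.
move=> cle; apply: lb_le_inf => [|_ [w [t [wF t0 ->]]]]; last exact: cle.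
by exists (majorant v 0 1), 0, 1; rewrite mxOver0 ?rpred0.
Qed.

Lemma g_extE v : v \is a mxOver F -> g_ext v = g v.
Proof.
move=> vF; apply/le_anti/andP; split; last first.
  by apply: g_ext_ge => w t; apply: g_le_majorant.
apply: le_trans (g_ext_le v vF ltr01) _.
by rewrite /majorant mul1r scale1r subrr normr0 mulr0 addr0.
Qed.

Lemma g_ext_lipschitz v v' : g_ext v' <= g_ext v + lip_g * `|v - v'|.
Proof.
rewrite -lerBlDr; apply: g_ext_ge => w t wF t0; rewrite lerBlDr.
apply: le_trans (g_ext_le v' wF t0) _.
rewrite /majorant -addrA lerD2l -mulrDr ler_wpM2l ?lip_g_ge0 //.
have -> : v' - t *: w = (v - t *: w) - (v - v') by rewrite opprB [RHS]addrC [RHS]addrA subrK.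
exact: ler_normB.
Qed.

Lemma g_ext_continuous : continuous g_ext.
Proof.
move=> v; apply: (lipschitz_at_continuous ltr01 lip_g_ge0) => v' _.
rewrite ler_norml lerBlDl [`|v - v'|]distrC g_ext_lipschitz andbT.
by rewrite lerNl opprB lerBlDl distrC g_ext_lipschitz.
Qed.

Lemma g_extZ_le l v : 0 < l -> g_ext (l *: v) <= l * g_ext v.
Proof.
move=> l0; rewrite -ler_pdivrMl //; apply: g_ext_ge => w t wF t0.
rewrite ler_pdivrMl //; apply: le_trans (g_ext_le _ wF (mulr_gt0 l0 t0)) _.
by rewrite /majorant mulrDr mulrA mulrCA -scalerA -scalerBr normrZ gtr0_norm.
Qed.

Lemma g_extZ l v : 0 <= l -> g_ext (l *: v) = l * g_ext v.
Proof.
rewrite le0r => /orP[/eqP->|l0].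
  by rewrite scale0r mul0r g_extE ?g0 // mxOver0 ?rpred0.
apply/le_anti; rewrite g_extZ_le //=.
have := g_extZ_le (l *: v) (_ : 0 < l^-1); rewrite invr_gt0 => /(_ l0).
by rewrite scalerA mulVf ?gt_eqF // scale1r -(ler_pM2l l0) mulrA divff ?gt_eqF // mul1r.
Qed.

End HomogeneousExtension.

Section Polyptych.
Variables (r : nat) (I : finType) (mu : I -> I -> 'rV[R]_r -> 'rV[R]_r).
Hypothesis Hmu : polyptych F mu.
Local Notation vec := 'rV[R]_r.

Lemma FvecP (v : vec) : Fvec F v <-> v \is a mxOver F.
Proof. by split=> [vF|/mxOverP vF i //]; apply/mxOverP => i j; rewrite (ord1 i). Qed.

Lemma pwFlinear_mxOver (f : vec -> vec) v : pwFlinear F f ->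
  v \is a mxOver F -> f v \is a mxOver F.
Proof. by move=> /pwFlinear_mx/(_ v)[A /mxOverP AF ->] vF; apply: mxOverM. Qed.

Lemma mu_id a v : mu a a v = v. Proof. by case: Hmu => _ []. Qed.
Lemma mu_comp a b c v : mu b c (mu a b v) = mu a c v.
Proof. by case: Hmu => _ [_ []]. Qed.
Lemma mu0 a b : mu a b 0 = 0. Proof. by case: Hmu => /(_ a b)/pwFlinear0. Qed.
Lemma muZ a b l v : 0 <= l -> mu a b (l *: v) = l *: mu a b v.
Proof. by move=> l0; case: Hmu => /(_ a b)/pwFlinearZ->. Qed.
Lemma mu_continuous a b : continuous (mu a b).
Proof. by case: Hmu => /(_ a b)/pwFlinear_continuous. Qed.

Lemma isM_chartinv a v : v \is a mxOver F -> isM F mu (chartinv mu a v).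
Proof.
move=> vF; split=> [b c|b]; first by rewrite /chartinv mu_comp.
by apply/FvecP; case: Hmu => /(_ a b)/pwFlinear_mxOver->.
Qed.

Lemma chartinvK a m : isMR mu m -> chartinv mu a (m a) = m.
Proof. by move=> mR; apply: funext => b; rewrite /chartinv -mR. Qed.

Lemma isM_zeroM : isM F mu (@zeroM R r I).
Proof. by split=> [a b|a]; rewrite /zeroM ?mu0 //; apply/FvecP/mxOver0/rpred0. Qed.

Lemma isM_addM a m m' : isM F mu m -> isM F mu m' -> isM F mu (addM mu a m m').
Proof. by move=> [_ /(_ a)/FvecP mF] [_ /(_ a)/FvecP m'F]; apply/isM_chartinv/rpredD. Qed.

Lemma isM_scaleM a l m : l \in F -> isM F mu m -> isM F mu (scaleM mu a l m).
Proof. by move=> lF [_ /(_ a)/FvecP mF]; apply/isM_chartinv/mxOverZ. Qed.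

Section PointExtension.
Variables (p : (I -> vec) -> R) (Hp : isPoint F mu p) (a0 : I).

Definition point_chart (v : vec) : R := p (chartinv mu a0 v).

Lemma point_chartD v w : v \is a mxOver F -> w \is a mxOver F ->
  point_chart v + point_chart w <= point_chart (v + w).
Proof.
move=> /(isM_chartinv a0) vM /(isM_chartinv a0) wM.
have [_ [/(_ _ _ vM wM)[/(_ a0) + _] _]] := Hp.
by rewrite /addM /chartinv !mu_id.
Qed.

Lemma point_chartZ c v : c \in F -> 0 <= c -> v \is a mxOver F ->
  point_chart (c *: v) = c * point_chart v.
Proof.
move=> cF c0 /(isM_chartinv a0) vM; have [_ [_ pZ]] := Hp.
by rewrite -(pZ a0 c _ vM cF c0) /scaleM /chartinv mu_id.
Qed.

Definition point_ext (m : I -> vec) : R := g_ext point_chart (m a0).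

Lemma point_ext_isExt : isExt F mu p point_ext.
Proof.
split=> [m [mR /(_ a0)/FvecP mF]|].
  by rewrite /point_ext (g_extE point_chartD point_chartZ mF) /point_chart chartinvK.
split=> [a|a l m mR l0].
  move=> v; rewrite /point_ext /chartinv.
  exact: (continuous_comp (@mu_continuous a a0 v)
    (g_ext_continuous point_chartD point_chartZ (x := mu a a0 v))).
by rewrite /point_ext /scaleM /chartinv muZ // -mR (g_extZ point_chartD point_chartZ).
Qed.

Lemma pconv_eq_lbound s t c : (forall m, In m t -> isM F mu m) ->
  pconv_eq F mu s t -> c \in F -> (forall m, In m s -> c <= p m) ->
  forall m, In m t -> c <= p m.
Proof.
move=> tM st cF cs m mt; have [[mR _] [extE _]] := (tM m mt, point_ext_isExt).
have m_in_t : in_pconv F mu t m.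
  by move=> q qR c' _ [qE _] _ c't; rewrite qE; [apply: c't | apply: tM].
rewrite -extE; last exact: tM.
exact: (st m mR).2 m_in_t p point_ext c Hp point_ext_isExt cF cs.
Qed.

End PointExtension.

Section Morphisms.
Hypothesis HI : (0 < #|I|)%N.

Lemma In_star x s t :
  In x (flatten [seq [seq addM mu a m m' | m' <- t, a <- enum I] | m <- s]) <->
  exists m m' a, [/\ In m s, In m' t & x = addM mu a m m'].
Proof.
split=> [/In_flatten[_ [/In_map[m [<- ms]]]]|].
  move=> /In_flatten[_ [/In_map[m' [<- m't]]]] /In_map[a [<- _]].
  by exists m, m', a.
move=> [m [m' [a [ms m't ->]]]].
apply/In_flatten; eexists; split; first by apply/In_map; exists m.
apply/In_flatten; eexists; split; first by apply/In_map; exists m'.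
by apply/In_map; exists a; split; last by apply/mem_In; rewrite mem_enum.
Qed.

Lemma validRep1 m : isM F mu m -> validRep F mu (Some [:: m]).
Proof. by split=> // _ [<-|[]]. Qed.

Lemma validRep_star s t : validRep F mu (Some s) -> validRep F mu (Some t) ->
  validRep F mu (starR mu (Some s) (Some t)).
Proof.
case: s => [[/(_ erefl)]//|m s [_ sM]]; case: t => [[/(_ erefl)]//|m' t [_ tM]].
have [a0 _] := card_gt0P HI.
split=> [star0|x /In_star[n [n' [a [ns n't ->]]]]]; last by apply: isM_addM; auto.
apply: (@List.in_nil _ (addM mu a0 m m')); rewrite -star0.
by apply/In_star; exists m, m', a0; split=> //; left.
Qed.

Section MorphismToPoint.
Variables (f : Rep R r I -> option R) (Hf : isMorph F mu f).

Lemma morph_single m : isM F mu m -> f (Some [:: m]) = Some (restr f m).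
Proof.
move=> /validRep1 mV; have [_ [/(_ _ mV)[v fv _] _]] := Hf.
by rewrite /restr fv.
Qed.

Lemma morph_min s : validRep F mu (Some s) ->
  exists v, f (Some s) = Some v /\ is_min_over (restr f) s v.
Proof.
elim: s => [[]//|m s IH [_ sM]]; have mM : isM F mu m by apply: sM; left.
case: s IH sM => [|m' s] IH sM.
  by exists (restr f m); split; [apply: morph_single | apply: is_min_over1].
have s'V : validRep F mu (Some (m' :: s)) by split=> // x xs; apply: sM; right.
have [v [fv vmin]] := IH s'V; have [_ [_ [fD _]]] := Hf.
have := fD _ _ (validRep1 mM) s'V; rewrite /= fv morph_single // => ->.
by eexists; split; last exact: is_min_over_cat (is_min_over1 _ m) vmin.
Qed.

Lemma morph_isPoint : isPoint F mu (restr f).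
Proof.
have [_ [ffin [_ [_ [fstar [_ fact]]]]]] := Hf.
split=> [m /validRep1 /ffin[v fv vF]|]; first by rewrite /restr fv.
split=> [m m' mM m'M|a l m mM lF l0].
  have [v [fv [vle [n nstar vn]]]] := morph_min (validRep_star (validRep1 mM) (validRep1 m'M)).
  have := fstar _ _ (validRep1 mM) (validRep1 m'M).
  rewrite /= fv !morph_single // => -[<-]; split=> [a|].
    by apply: vle; apply/In_star; exists m, m', a; split=> //; left.
  by move: nstar vn => /In_star[_ [_ [a [[<-|[]] [<-|[]] ->]]]] ->; exists a.
have := fact a l _ (validRep1 mM) lF l0.
by rewrite /= !morph_single //; [case | exact: isM_scaleM].
Qed.

End MorphismToPoint.

Section PointToMorphism.
Variables (p : (I -> vec) -> R) (Hp : isPoint F mu p).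

Definition point_morph (o : Rep R r I) : option R :=
  if o is Some s then Some (seq_min p s) else None.

Lemma point_zeroM : p (@zeroM R r I) = 0.
Proof.
have [a0 _] := card_gt0P HI; have [_ [_ pZ]] := Hp.
have := pZ a0 0 _ isM_zeroM (rpred0 F) (lexx 0); rewrite mul0r => <-.
by congr p; apply: funext => b; rewrite /scaleM /chartinv scale0r mu0.
Qed.

Lemma seq_min_validP s : validRep F mu (Some s) ->
  is_min_over p s (seq_min p s) /\ seq_min p s \in F.
Proof.
move=> [s0 sM]; have [pF _] := Hp; have smin := seq_minP p s0.
by split=> //; have [_ [m ms ->]] := smin; apply/pF/sM.
Qed.

Lemma seq_min_pconv_le s t : validRep F mu (Some s) -> validRep F mu (Some t) ->
  pconv_eq F mu s t -> seq_min p s <= seq_min p t.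
Proof.
move=> sV [t0 tM] st; have [a0 _] := card_gt0P HI.
have [[vle _] vF] := seq_min_validP sV; have [_ [m mt ->]] := seq_minP p t0.
exact: (pconv_eq_lbound Hp a0 tM st vF vle mt).
Qed.

Lemma point_morph_repEq o o' : validRep F mu o -> validRep F mu o' ->
  repEq F mu o o' -> point_morph o = point_morph o'.
Proof.
case: o o' => [s|] [t|] //= sV tV st; congr Some.
apply/le_anti; rewrite !seq_min_pconv_le // => x xR.
exact: iff_sym (st x xR).
Qed.

Lemma point_morph_oplus o o' : validRep F mu o -> validRep F mu o' ->
  point_morph (oplusR o o') = minE (point_morph o) (point_morph o').
Proof.
case: o o' => [s|] [t|] //= sV tV; congr Some.
have [[s0 _] [t0 _]] := (sV, tV).
apply: is_min_over_uniq (seq_minP p _) (is_min_over_cat (seq_minP p s0) (seq_minP p t0)).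
by case: s s0 {sV}.
Qed.

Lemma point_morph_star o o' : validRep F mu o -> validRep F mu o' ->
  point_morph (starR mu o o') = addE (point_morph o) (point_morph o').
Proof.
case: o o' => [s|] [t|] //= sV tV; congr Some.
have [[[sle [m ms sm]] _] [[tle [m' m't tm]] _]] := (seq_min_validP sV, seq_min_validP tV).
have [sM tM] := (sV.2, tV.2); have [_ [pD _]] := Hp.
have [_ [a ea]] := pD m m' (sM _ ms) (tM _ m't).
have [starV _] := validRep_star sV tV.
apply: is_min_over_uniq (seq_minP p starV) _; split.
  move=> _ /In_star[n [n' [b [ns n't ->]]]].
  have [/(_ b) nle _] := pD n n' (sM _ ns) (tM _ n't).
  by apply: le_trans nle; apply: lerD; [apply: sle | apply: tle].
by exists (addM mu a m m'); [apply/In_star; exists m, m', a | rewrite ea sm tm].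
Qed.

Lemma point_morph_act a l o : validRep F mu o -> l \in F -> 0 <= l ->
  point_morph (actR mu a l o) = actE l (point_morph o).
Proof.
case: o => [s [s0 sM]|_] lF l0 /=; last by case: eqP => //= _; rewrite point_zeroM.
have [_ [_ pZ]] := Hp; congr Some.
have [sle [m ms sm]] := seq_minP p s0.
apply: is_min_over_uniq (seq_minP p _) _.
  by move=> /(congr1 size); rewrite size_map => /size0nil.
split=> [_ /In_map[n [<- ns]]|].
  by rewrite pZ //; [apply: ler_wpM2l => //; apply: sle | apply: sM].
by exists (scaleM mu a l m); [apply/In_map; exists m | rewrite pZ ?sm //; apply: sM].
Qed.

Lemma point_morph_isMorph : isMorph F mu point_morph.
Proof.
split; first exact: point_morph_repEq.
split; first by move=> s /seq_min_validP[_ vF]; exists (seq_min p s).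
split; first exact: point_morph_oplus.
split=> //; split; first exact: point_morph_star.
by split; [rewrite /= point_zeroM | exact: point_morph_act].
Qed.

End PointToMorphism.
End Morphisms.
End Polyptych.
End SubringPoints.

Theorem mainTheorem7 (R : realType) (F : {pred R}) (HF : subring_closed F)
  (r : nat) (I : finType) (HI : (0 < #|I|)%N)
  (mu : I -> I -> 'rV[R]_r -> 'rV[R]_r) (Hmu : polyptych F mu) :
  (forall f, isMorph F mu f -> isPoint F mu (restr f)) /\
  (forall p, isPoint F mu p ->
     exists f, isMorph F mu f /\ forall m, isM F mu m -> restr f m = p m) /\
  (forall p f, isPoint F mu p -> isMorph F mu f ->
     (forall m, isM F mu m -> restr f m = p m) ->
     f None = None /\
     forall s, validRep F mu (Some s) ->
       exists v, f (Some s) = Some v /\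
         (forall m, In m s -> v <= p m) /\
         (exists2 m, In m s & v = p m)).
Proof.
split; first exact: morph_isPoint.
split=> [p Hp|p f Hp Hf fp]; first by exists (point_morph p); split=> //; apply: point_morph_isMorph.
have [_ [_ [_ [fN _]]]] := Hf; split=> // s sV.
have [v [fv [vle [m ms vm]]]] := morph_min Hf sV.
have sM := sV.2.
exists v; split=> //; split=> [m' m's|]; first by rewrite -fp; [apply: vle | apply: sM].
by exists m; rewrite // -fp //; apply: sM.
Qed.
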